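(* Let $\Omega$ be a set and let $G=H\times K\leq{\rm Sym}(\Omega)$ be finite, the internal direct product of subgroups $H,K$ with $\gcd(|H|,|K|)=1$, and suppose $H$ is abelian. Let $\overline{\Omega}=\{\alpha^H\mid\alpha\in\Omega\}$ be the set of $H$-orbits, on which $K$ acts by $(\alpha^H)^k=(\alpha^k)^H$. Suppose $H^{(2),\Omega}=H$ and $K^{(2),\overline{\Omega}}=K$. Then $G^{(2),\Omega}=G$.
   Context: Permutations act on the right. For $X\leq{\rm Sym}(\Omega)$, the $2$-closure of $X$ on $\Omega$ is $X^{(2),\Omega}=\{\theta\in{\rm Sym}(\Omega)\mid \forall \alpha,\beta\in\Omega\ \exists g\in X:\ \alpha^\theta=\alpha^g,\ \beta^\theta=\beta^g\}$. Here $K^{(2),\overline{\Omega}}$ is the $2$-closure on $\overline{\Omega}$ of the permutation group induced by $K$ on $\overline{\Omega}$, and $K^{(2),\overline{\Omega}}=K$ means that this induced group coincides with its $2$-closure (with $K$ identified with its image). *)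

(* A permutation group G <= Sym(Omega) on an arbitrary set
   (type) Omega is modelled as a finite group acting faithfully on Omega. *)
From mathcomp Require Import all_boot all_fingroup all_solvable.
From Stdlib Require Import ClassicalEpsilon.

Set Implicit Arguments.
Unset Strict Implicit.
Unset Printing Implicit Defensive.

Local Open Scope group_scope.

Section Defs.
Variables (T : Type) (gT : finGroupType).

Definition is_right_action (to : T -> gT -> T) : Prop :=
  (forall x, to x 1 = x) /\ (forall x a b, to x (a * b) = to (to x a) b).

Definition faithful_on (to : T -> gT -> T) (X : {set gT}) : Prop :=
  forall g, g \in X -> (forall x, to x g = x) -> g = 1.

Definition induced_by (to : T -> gT -> T) (X : {set gT}) (theta : T -> T) : Prop :=
  exists2 g, g \in X & forall x, theta x = to x g.

Definition in_2closure (to : T -> gT -> T) (X : {set gT}) (theta : T -> T) : Prop :=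
  bijective theta /\
  forall a b, exists2 g, g \in X & theta a = to a g /\ theta b = to b g.

Definition two_closed (to : T -> gT -> T) (X : {set gT}) : Prop :=
  forall theta : T -> T, in_2closure to X theta <-> induced_by to X theta.

Definition horbit (to : T -> gT -> T) (H : {set gT}) (a : T) : T -> Prop :=
  fun b => exists2 h, h \in H & b = to a h.

Definition Obar (to : T -> gT -> T) (H : {set gT}) : Type :=
  {A : T -> Prop | exists a, A = horbit to H a}.

Definition horb (to : T -> gT -> T) (H : {set gT}) (a : T) : Obar to H :=
  exist _ (horbit to H a) (ex_intro _ a erefl).

Definition orep (to : T -> gT -> T) (H : {set gT}) (A : Obar to H) : T :=
  proj1_sig (constructive_indefinite_description _ (proj2_sig A)).

Definition bar_act (to : T -> gT -> T) (H : {set gT}) (A : Obar to H) (k : gT)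
  : Obar to H := horb to H (to (orep A) k).

End Defs.

(* An element theta of G^(2) permutes the H-orbits, because G normalises H,
   and the permutation it induces on them lies in K^(2) because H acts
   trivially on its own orbits; so theta agrees on the orbits with some k0 in K,
   and theta' := theta k0^-1 fixes every H-orbit. For points a, b take g = hk
   in G agreeing with theta on both; then for x in {a, b}, y := x^h and
   k' := k k0^-1 we have y^k' = theta'(x) in x^H = y^H, say y^k' = y^h'.
   Since h' and k' commute and have coprime orders, this forces y^k' = y, so
   theta' agrees with h on a and b. Thus theta' lies in H^(2) = H and
   theta = theta' k0 lies in G. *)
From mathcomp Require Import all_boot all_fingroup all_solvable.
From Stdlib Require Import ClassicalEpsilon ProofIrrelevance.
From Stdlib Require Import FunctionalExtensionality PropExtensionality.

Set Implicit Arguments.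
Unset Strict Implicit.
Unset Printing Implicit Defensive.

Local Open Scope group_scope.

Definition pairwise_induced (T : Type) (gT : finGroupType) (to : T -> gT -> T)
    (X : {set gT}) (theta : T -> T) : Prop :=
  forall a b, exists2 g, g \in X & theta a = to a g /\ theta b = to b g.

Definition bar_map (T : Type) (gT : finGroupType) (to : T -> gT -> T)
    (H : {set gT}) (phi : T -> T) (A : Obar to H) : Obar to H :=
  horb to H (phi (orep A)).
Arguments bar_map {T gT} to H phi A.

Section RightAction.

Variables (T : Type) (gT : finGroupType) (to : T -> gT -> T).
Hypotheses (act1 : forall x, to x 1 = x)
           (actM : forall x a b, to x (a * b) = to (to x a) b).

Lemma actK x g : to (to x g) g^-1 = x.
Proof. by rewrite -actM mulgV act1. Qed.

Lemma actKV x g : to (to x g^-1) g = x.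
Proof. by rewrite -actM mulVg act1. Qed.

Lemma actX_fix x g n : to x g = x -> to x (g ^+ n) = x.
Proof. by move=> xg; elim: n => [|n IHn]; rewrite ?act1 // expgS actM xg. Qed.

Lemma act_commute_coprime_fix x h k :
  commute h k -> coprime #[h] #[k] -> to x k = to x h -> to x k = x.
Proof.
move=> chk co_hk xkh.
have xXkh n : to x (k ^+ n) = to x (h ^+ n).
  elim: n => [|n IHn]; first by rewrite !expg0.
  by rewrite expgS actM xkh -actM (commuteX2 1 n chk) actM IHn -actM -expgSr.
have fix_hk : to x (h ^+ #[k]) = x by rewrite -xXkh expg_order act1.
have : h \in <[h ^+ #[k]]>.
  have /eqP <- : generator <[h]> (h ^+ #[k]) by rewrite generator_coprime.
  exact: cycle_id.
by case/cycleP=> j hE; rewrite xkh hE actX_fix.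
Qed.

Lemma induced_in_2closure (X : {set gT}) theta :
  induced_by to X theta -> in_2closure to X theta.
Proof.
case=> g gX thetaE; split; last by move=> a b; exists g; rewrite ?thetaE.
by exists (to^~ g^-1) => x; rewrite thetaE ?actK // -{2}(invgK g) actK.
Qed.

Lemma pairwise_induced_inv (X : {group gT}) theta theta' :
  cancel theta' theta -> pairwise_induced to X theta ->
  pairwise_induced to X theta'.
Proof.
move=> thetaK Xtheta a b; have [g gX [ea eb]] := Xtheta (theta' a) (theta' b).
by exists g^-1; rewrite ?groupV // -{2}(thetaK a) -{2}(thetaK b) ea eb !actK.
Qed.

Variable H : {group gT}.

Lemma horb_orep (A : Obar to H) : horb to H (orep A) = A.
Proof.
have := proj2_sig (constructive_indefinite_description _ (proj2_sig A)).
rewrite /orep /horb; case: A => P p /= eP.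
by apply: ProofIrrelevanceTheory.subset_eq_compat; rewrite -eP.
Qed.

Lemma horbE x y : horb to H x = horb to H y <-> horbit to H x = horbit to H y.
Proof.
split; first by move/(f_equal (@proj1_sig _ _)).
exact: ProofIrrelevanceTheory.subset_eq_compat.
Qed.

Lemma horbit_act x h : h \in H -> horbit to H (to x h) = horbit to H x.
Proof.
move=> hH; apply: functional_extensionality => y.
apply: propositional_extensionality; split.
  by case=> h' h'H ->; exists (h * h'); rewrite ?groupM // actM.
case=> h' h'H ->; exists (h^-1 * h'); rewrite ?groupM ?groupV //.
by rewrite -actM mulKVg.
Qed.

Lemma horb_act x h : h \in H -> horb to H (to x h) = horb to H x.
Proof. by move=> hH; apply/horbE/horbit_act. Qed.

Lemma horb_eqP x y :
  horb to H x = horb to H y -> exists2 h, h \in H & y = to x h.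
Proof.
move/horbE=> xy; have : horbit to H y y by exists 1; rewrite ?act1.
by rewrite -xy.
Qed.

Lemma horb_act_norm x y g :
  g \in 'N(H) -> horb to H x = horb to H y ->
  horb to H (to x g) = horb to H (to y g).
Proof.
move=> nHg /horb_eqP[h hH ->].
by rewrite -actM conjgC actM (horb_act (to x g)) // memJ_norm.
Qed.

Lemma pairwise_induced_horb (G : {group gT}) phi x y :
  G \subset 'N(H) -> pairwise_induced to G phi ->
  horb to H x = horb to H y -> horb to H (phi x) = horb to H (phi y).
Proof.
move=> nHG Gphi xy; have [g gG [-> ->]] := Gphi x y.
exact: horb_act_norm (subsetP nHG g gG) xy.
Qed.

Lemma bar_mapE (G : {group gT}) phi x :
  G \subset 'N(H) -> pairwise_induced to G phi ->
  bar_map to H phi (horb to H x) = horb to H (phi x).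
Proof.
by move=> nHG /(pairwise_induced_horb nHG); apply; rewrite horb_orep.
Qed.

Lemma bar_act_horb x g :
  g \in 'N(H) -> bar_act (horb to H x) g = horb to H (to x g).
Proof. by move=> nHg; apply: horb_act_norm; rewrite ?horb_orep. Qed.

Lemma bar_map_comp (G : {group gT}) phi psi A :
  G \subset 'N(H) -> pairwise_induced to G psi ->
  bar_map to H psi (bar_map to H phi A) = bar_map to H (psi \o phi) A.
Proof. exact: bar_mapE. Qed.

Lemma bar_map_bij (G : {group gT}) phi :
  G \subset 'N(H) -> in_2closure to G phi -> bijective (bar_map to H phi).
Proof.
move=> nHG [[phi' phiK phiK'] Gphi].
have Gphi' := pairwise_induced_inv phiK' Gphi.
exists (bar_map to H phi') => A.
  by rewrite (bar_map_comp _ _ nHG Gphi') /bar_map /= phiK horb_orep.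
by rewrite (bar_map_comp _ _ nHG Gphi) /bar_map /= phiK' horb_orep.
Qed.

Section DirectProduct.

Variables (G K : {group gT}).
Hypotheses (dpG : H \x K = G) (coHK : coprime #|H| #|K|).

Let nHG : G \subset 'N(H).
Proof. by have [/normal_norm] := dprod_normal2 dpG. Qed.

Let cHK h k : h \in H -> k \in K -> commute h k.
Proof. by have [_ _ /centsP cKH _] := dprodP dpG => hH kK; apply/esym/cKH. Qed.

Let sKG : K \subset G.
Proof. by have [_ <- _ _] := dprodP dpG; rewrite mulG_subr. Qed.

Lemma horb_dprod x h k :
  h \in H -> k \in K -> horb to H (to x (h * k)) = horb to H (to x k).
Proof. by move=> hH kK; rewrite cHK // actM horb_act. Qed.

Lemma dprod_fix_horb x k :
  k \in K -> horb to H (to x k) = horb to H x -> to x k = x.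
Proof.
move=> kK /esym/horb_eqP[h hH xkh]; apply: act_commute_coprime_fix xkh.
  exact: cHK.
exact: coprime_dvdl (order_dvdG hH) (coprime_dvdr (order_dvdG kK) coHK).
Qed.

Section TwoClosureElement.

Variable theta : T -> T.
Hypothesis Gtheta : in_2closure to G theta.

Lemma bar_map_in_2closure :
  in_2closure (@bar_act _ _ to H) K (bar_map to H theta).
Proof.
split; first exact: bar_map_bij Gtheta.
move=> A B; have [g gG [ea eb]] := Gtheta.2 (orep A) (orep B).
have [h [k [hH kK gE _]]] := mem_dprod dpG gG.
by exists k; rewrite // /bar_map /bar_act ea eb gE !horb_dprod.
Qed.

Variable k0 : gT.
Hypotheses (k0K : k0 \in K)
           (thetaE : forall x, horb to H (theta x) = horb to H (to x k0)).

Lemma horb_thetaV x : horb to H (to (theta x) k0^-1) = horb to H x.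
Proof.
rewrite (horb_act_norm _ (thetaE x)) ?actK //.
by rewrite (subsetP nHG) ?groupV ?(subsetP sKG).
Qed.

Lemma thetaV_in_2closure : in_2closure to H (fun x => to (theta x) k0^-1).
Proof.
have [[theta' thetaK thetaK'] Gth] := Gtheta.
split.
  exists (fun x => theta' (to x k0)) => x; first by rewrite actKV thetaK.
  by rewrite thetaK' actK.
move=> a b; have [g gG [ea eb]] := Gth a b.
have [h [k [hH kK eg _]]] := mem_dprod dpG gG.
have kk0K : k * k0^-1 \in K by rewrite groupM ?groupV.
suff thetaVE x : theta x = to x g -> to (theta x) k0^-1 = to x h.
  by exists h; rewrite // !thetaVE.
move=> thx; have thxV : to (theta x) k0^-1 = to (to x h) (k * k0^-1).
  by rewrite thx eg -!actM mulgA.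
by rewrite thxV dprod_fix_horb // -thxV horb_thetaV horb_act.
Qed.

End TwoClosureElement.

Lemma two_closed_dprod :
  two_closed to H -> two_closed (@bar_act _ _ to H) K -> two_closed to G.
Proof.
move=> cH cK theta; split; last exact: induced_in_2closure.
move=> Gtheta; have [k0 k0K barE] := (cK _).1 (bar_map_in_2closure Gtheta).
have thetaE x : horb to H (theta x) = horb to H (to x k0).
  rewrite -(bar_mapE _ nHG Gtheta.2) barE bar_act_horb //.
  by rewrite (subsetP nHG) ?(subsetP sKG).
have [h0 h0H thetaVE] := (cH _).1 (thetaV_in_2closure Gtheta k0K thetaE).
exists (h0 * k0); last by move=> x; rewrite actM -thetaVE actKV.
by rewrite -(dprodW dpG) mem_mulg.
Qed.

End DirectProduct.

End RightAction.

Theorem mainTheorem5 (T : Type) (gT : finGroupType) (to : T -> gT -> T)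
    (G H K : {group gT}) :
  is_right_action to ->
  faithful_on to G ->
  (H \x K = G)%g ->
  coprime #|H| #|K| ->
  abelian H ->
  two_closed to H ->
  two_closed (bar_act (to := to) (H := H)) K ->
  two_closed to G.
Proof. by move=> [act1 actM] _ dpG coHK _; apply: two_closed_dprod. Qed.
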